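(* For every prime $p\geq 11$, $$P(p,3)\leq (p-1)!-\left\lceil \tfrac{p}{3}\right\rceil+2\leq (p-1)!-2 .$$
   Context: $S_n$ denotes the set (group) of all permutations of $[n]=\{1,\dots,n\}$, with product $\lambda\cdot\sigma$ defined by $(\lambda\cdot\sigma)(i)=\sigma(\lambda(i))$. An adjacent transposition is a transposition $(i,i+1)$ with $1\leq i\leq n-1$. The Kendall $\tau$-distance $d_K(\rho,\pi)$ between $\rho,\pi\in S_n$ is the minimum number of adjacent transpositions whose product equals $\rho\pi^{-1}$ (equivalently, the graph distance in the Cayley graph of $S_n$ with respect to the set of adjacent transpositions). A permutation code of length $n$ is a non-empty subset of $S_n$; $P(n,d)$ denotes the maximum size of a permutation code $C\subseteq S_n$ such that $d_K(x,y)\geq d$ for all distinct $x,y\in C$. *)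

From mathcomp Require Import all_boot all_order all_fingroup.
Set Implicit Arguments. Unset Strict Implicit. Unset Printing Implicit Defensive.
Import GroupScope.

(* Permutations of [n] are represented by 'S_n = {perm 'I_n} (points 0..n-1).
   MathComp's product satisfies (s * t) x = t (s x), i.e. exactly the paper's
   convention (lambda . sigma)(i) = sigma(lambda(i)). *)

Definition adj_tperm n (i : 'I_n) : 'S_n :=
  if insub (i.+1) is Some j then tperm i j else 1.
Definition adj_word n (w : seq 'I_n) : bool := all (fun i : 'I_n => i.+1 < n) w.
Definition word_prod n (w : seq 'I_n) : 'S_n := \prod_(i <- w) adj_tperm i.

Definition prod_of_k_adj n (k : nat) (s : 'S_n) : bool :=
  [exists w : k.-tuple 'I_n, adj_word w && (word_prod w == s)].

(* Every permutation of [n] is a product of at most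
   n*n adjacent transpositions, so searching k in 0 .. n*n gives the true
   minimum. *)
Definition dK n (rho pi : 'S_n) : nat :=
  find (fun k => prod_of_k_adj k (rho * pi^-1)) (iota 0 (n * n).+1).

(* P(n,d): maximum size of a code C in S_n with d_K(x,y) >= d for all distinct
   x, y in C.  (Nonemptiness of C is irrelevant for the maximum: singletons
   qualify.) *)
Definition P_kendall n (d : nat) : nat :=
  \max_(C : {set 'S_n} | [forall x in C, forall y in C, (x != y) ==> (d <= dK x y)]) #|C|.

(* Balls of radius one in the Kendall metric are pairwise disjoint around the
   codewords of a code C of minimum distance 3.  Fix a value v and a position
   i, and let z_k be the number of codewords c with c k = v.  The elements x of
   these balls with x i = v number at least
   (p - deg i) z_i + z_(i-1) + z_(i+1), deg being the degree of i in the path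
   0 - 1 - ... - (p-1), and at most (p-1)! permutations satisfy x i = v.
   By Wilson's theorem (p-1)! + 1 = p M, so every such local sum falls short
   of p M: each window z_(i-1), z_i, z_(i+1) carries a deficit below M, and
   an excess of z_i over M is paid (p - 2) times over by deficits of its
   neighbours.  Summing over the path, the total deficit is at least p/3 and
   the total excess is at most 2/(p-2) times it, so |C| = sum_k z_k
   <= p M + 1 - ceil(p/3) = (p-1)! + 2 - ceil(p/3). *)

From mathcomp Require Import all_boot all_order all_fingroup.
From mathcomp Require Import zify.
Set Implicit Arguments. Unset Strict Implicit. Unset Printing Implicit Defensive.

Definition path_deg n i := (0 < i) + (i.+1 < n).

Lemma card_ord_val_eq n (b : bool) k :
  #|[set t : 'I_n | b && (t == k :> nat)]| = b && (k < n).
Proof.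
case: b => /=; last first.
  by apply/eqP; rewrite cards_eq0; apply/eqP/setP => t; rewrite !inE.
have [k_lt_n | k_ge_n] := ltnP k n; last first.
  apply/eqP; rewrite cards_eq0; apply/eqP/setP => t; rewrite !inE.
  by case: eqP (ltn_ord t) => // ->; lia.
transitivity #|[set Ordinal k_lt_n]|; last by rewrite cards1.
by apply: eq_card => t; rewrite !inE -val_eqE.
Qed.

Section AdjacentTranspositions.

Variable n : nat.
Implicit Types (t x i v : 'I_n) (s : 'S_n).
Local Open Scope group_scope.

Lemma adj_tpermE t (ht : t.+1 < n) : adj_tperm t = tperm t (Ordinal ht).
Proof.
rewrite /adj_tperm; case: insubP => [j _ hj|]; last by rewrite ht.
by congr tperm; apply: val_inj.
Qed.

Lemma adj_tpermV t : (adj_tperm t)^-1 = adj_tperm t.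
Proof. by rewrite /adj_tperm; case: insub => [j|]; rewrite ?tpermV ?invg1. Qed.

Lemma adj_tperm_val t : t.+1 < n -> adj_tperm t t = t.+1 :> nat.
Proof. by move=> ht; rewrite (adj_tpermE ht) tpermL. Qed.

Lemma adj_tperm_fix t x : x != t -> x != t.+1 :> nat -> adj_tperm t x = x.
Proof.
move=> xt xt1; rewrite /adj_tperm; case: insubP => [j _ hj|]; last by rewrite perm1.
rewrite tpermD 1?eq_sym //; apply: contra xt1 => /eqP ->; by rewrite hj.
Qed.

Lemma adj_tperm_neq1 t : t.+1 < n -> adj_tperm t != 1.
Proof.
move=> ht; apply/eqP => e; move: (adj_tperm_val ht).
by rewrite e perm1 => /eqP; rewrite eqn_leq ltnn andbF.
Qed.

Lemma adj_tperm_inj : {in [set t : 'I_n | t.+1 < n] &, injective (@adj_tperm n)}.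
Proof.
move=> t1 t2; rewrite !inE => h1 h2 e.
move: (adj_tperm_val h1); rewrite e (adj_tpermE h2).
by case: tpermP => [-> | -> /= | ] //; lia.
Qed.

Definition adj_ball : {set 'S_n} :=
  1 |: [set adj_tperm t | t in [set t : 'I_n | t.+1 < n]].

Lemma adj_ballV s : s \in adj_ball -> s^-1 = s.
Proof. by rewrite !inE => /predU1P[-> | /imsetP[t _ ->]]; rewrite ?invg1 ?adj_tpermV. Qed.

Lemma adj_ball_word s : s \in adj_ball ->
  exists2 w : seq 'I_n, size w <= 1 & adj_word w && (word_prod w == s).
Proof.
rewrite !inE => /predU1P[-> | /imsetP[t]].
  by exists [::]; rewrite // /word_prod big_nil eqxx.
by rewrite inE => ht ->; exists [:: t]; rewrite // /word_prod big_seq1 /adj_word /= ht eqxx.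
Qed.

Lemma adj_tperm_in_ball (t : 'I_n) : t.+1 < n -> adj_tperm t \in adj_ball.
Proof. by move=> ht; rewrite /adj_ball setU1r // imset_f ?inE. Qed.

Lemma card_adj_ball_fix_ge i : n - path_deg n i <= #|[set s in adj_ball | s i == i]|.
Proof.
pose A := [set t : 'I_n | t.+1 < n].
pose B := [set t : 'I_n | (i.+1 < n) && (t == i :> nat)]
      :|: [set t : 'I_n | (0 < i) && (t == i.-1 :> nat)].
pose T := A :\: B.
have card_A : #|A| = n.-1.
  have -> : A = ~: [set t : 'I_n | true && (t == n.-1 :> nat)].
    by apply/setP => t; rewrite !inE; move: (ltn_ord t); lia.
  move: (cardsC [set t : 'I_n | true && (t == n.-1 :> nat)]).
  by rewrite card_ord_val_eq card_ord; lia.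
have card_T : n.-1 - path_deg n i <= #|T|.
  rewrite cardsD card_A leq_sub2l // (leq_trans (subset_leq_card (subsetIr _ _))) //.
  by rewrite (leq_trans (leq_card_setU _ _)) // !card_ord_val_eq /path_deg; lia.
have T_fix : 1 |: [set adj_tperm t | t in T] \subset [set s in adj_ball | s i == i].
  apply/subsetP => s /setU1P[-> | /imsetP[t]]; first by rewrite inE setU11 perm1 eqxx.
  move=> /setDP[]; rewrite [t \in A]inE => ht tB ->.
  rewrite inE adj_tperm_in_ball //=; move: tB; rewrite !inE negb_or => /andP[ti ti1].
  by rewrite adj_tperm_fix // -?val_eqE /=; lia.
have card_T1 : #|1 |: [set adj_tperm t | t in T]| = #|T|.+1.
  rewrite cardsU1 card_in_imset; last first.
    by apply: sub_in2 adj_tperm_inj => u; rewrite !inE => /andP[].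
  suff -> : 1 \notin [set adj_tperm t | t in T] by [].
  apply/negP => /imsetP[t]; rewrite !inE => /andP[_ ht] /esym/eqP.
  exact/negP/adj_tperm_neq1.
apply: leq_trans (subset_leq_card T_fix); rewrite card_T1; move: card_T (ltn_ord i); lia.
Qed.

Lemma card_adj_ball_at_ge i v :
  (n - path_deg n i) * (v == i :> nat) + (0 < i) * (v == i.-1 :> nat)
    + (i.+1 < n) * (v == i.+1 :> nat) <= #|[set s in adj_ball | s i == v]|.
Proof.
have i_lt_n := ltn_ord i.
have [/val_inj -> | v_neq_i] := eqVneq (v : nat) i.
  rewrite muln1 -addnA (_ : (0 < i) * _ + (i.+1 < n) * _ = 0)%N; last by lia.
  by rewrite addn0 card_adj_ball_fix_ge.
rewrite muln0 add0n.
have [/andP[i_gt0 /eqP vi] | not_below] := boolP ((0 < i) && (v == i.-1 :> nat)).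
  have hv : v.+1 < n by lia.
  apply: leq_trans (_ : 0 < _); first by lia.
  apply/card_gt0P; exists (adj_tperm v); rewrite inE adj_tperm_in_ball //=.
  by rewrite (adj_tpermE hv) (_ : i = Ordinal hv) ?tpermR //; apply: val_inj => /=; lia.
have [/andP[hi /eqP vi] | not_above] := boolP ((i.+1 < n) && (v == i.+1 :> nat)).
  apply: leq_trans (_ : 0 < _); first by lia.
  apply/card_gt0P; exists (adj_tperm i); rewrite inE adj_tperm_in_ball //=.
  by rewrite -val_eqE /= adj_tperm_val // vi.
by move: not_below not_above; lia.
Qed.

End AdjacentTranspositions.

Section KendallBalls.

Variable n : nat.
Local Open Scope group_scope.

Lemma dK_le_size (x y : 'S_n) (w : seq 'I_n) : adj_word w ->
  word_prod w = x * y^-1 -> size w <= n * n -> dK x y <= size w.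
Proof.
move=> aw wxy le_w_nn; rewrite /dK; case: leqP => // /(before_find 0).
rewrite nth_iota ?add0n // => <-; apply/existsP.
by exists (in_tuple w); rewrite aw wxy eqxx.
Qed.

Definition kendall_code d (C : {set 'S_n}) :=
  [forall x in C, forall y in C, (x != y) ==> (d <= dK x y)].

Lemma adj_ball_mul_inj (C : {set 'S_n}) (c c' s s' : 'S_n) :
  1 < n -> kendall_code 3 C -> c \in C -> c' \in C ->
  s \in adj_ball n -> s' \in adj_ball n -> s * c = s' * c' -> c = c'.
Proof.
move=> n_gt1 /forall_inP codeC cC c'C sB s'B e.
apply/eqP; apply: contraT => neq_cc'.
have := forall_inP (codeC c cC) c' c'C; rewrite neq_cc' /=.
have [w w_le1 /andP[aw /eqP ws]] := adj_ball_word sB.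
have [w' w'_le1 /andP[aw' /eqP w's]] := adj_ball_word s'B.
have e' : c * c'^-1 = s^-1 * s' by rewrite -[c](mulKg s) e !mulgA mulgK.
suff : dK c c' <= size (w ++ w') by rewrite size_cat; lia.
apply: dK_le_size; last by rewrite size_cat; nia.
  by rewrite /adj_word all_cat; apply/andP.
by rewrite /word_prod big_cat -!/(word_prod _) ws w's e' (adj_ballV sB).
Qed.

Lemma card_perm_at_le (i v : 'I_n) : #|[set x : 'S_n | x i == v]| <= n.-1`!.
Proof.
rewrite -[n in n.-1]card_ord -(cardsC1 i) -card_perm.
rewrite -(card_imset _ (mulIg (tperm v i))); apply: subset_leq_card.
apply/subsetP => y /imsetP[x]; rewrite inE => /eqP xi ->.
apply/subsetP => k; rewrite !inE permM; apply: contra => /eqP->.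
by rewrite xi tpermL.
Qed.

Lemma kendall_code_balls_at_le (C : {set 'S_n}) (i v : 'I_n) :
  1 < n -> kendall_code 3 C ->
  \sum_(c in C) #|[set s in adj_ball n | c (s i) == v]| <= n.-1`!.
Proof.
move=> n_gt1 codeC; under eq_bigr do rewrite -sum1dep_card.
rewrite pair_big_dep sum1dep_card; set D := [set _ | _].
have inj : {in D &, injective (fun cs : 'S_n * 'S_n => cs.2 * cs.1)}.
  move=> [c s] [c' s']; rewrite ![_ \in D]inE /= => /and3P[cC sB _] /and3P[c'C s'B _] e.
  have ecc' := adj_ball_mul_inj n_gt1 codeC cC c'C sB s'B e.
  by move: e; rewrite ecc' => /mulIg ->.
rewrite -(card_in_imset inj); apply: leq_trans (card_perm_at_le i v).
apply: subset_leq_card; apply/subsetP => x /imsetP[[c s]].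
by rewrite inE /= => /and3P[_ _ csv] ->; rewrite inE permM.
Qed.

End KendallBalls.

Section PreimageCounts.

Variables (n : nat) (C : {set 'S_n}) (v : 'I_n).
Local Open Scope group_scope.

Definition preim_count k := #|[set c : 'S_n in C | c^-1 v == k :> nat]|.

Lemma preim_countE k : preim_count k = \sum_(c in C) ((c : 'S_n)^-1 v == k :> nat).
Proof.
rewrite /preim_count -sum1dep_card big_mkcondr /=.
by apply: eq_bigr => c _; case: eqP.
Qed.

Lemma sum_preim_count : \sum_(k < n) preim_count k = #|C|.
Proof.
rewrite -sum1_card (partition_big (fun c : 'S_n => c^-1 v) xpredT) //=.
by apply: eq_bigr => k _; rewrite preim_countE big_mkcondr /=.
Qed.

Lemma kendall_code_path_bound (i : 'I_n) : 1 < n -> kendall_code 3 C ->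
  (n - path_deg n i) * preim_count i + (0 < i) * preim_count i.-1
    + (i.+1 < n) * preim_count i.+1 <= n.-1`!.
Proof.
move=> n_gt1 codeC; apply: leq_trans (kendall_code_balls_at_le i v n_gt1 codeC).
rewrite !preim_countE !big_distrr -!big_split /=; apply: leq_sum => c _.
under eq_finset do rewrite (canF_eq (permK c)).
exact: card_adj_ball_at_ge.
Qed.

End PreimageCounts.

Lemma deficit_bounds (p M x y w : nat) (a b : bool) : 1 < p ->
  (p - (a + b)) * x + a * y + b * w < p * M ->
  0 < a * (M - y) + b * (M - w) + (M - x)
  /\ (p - 2) * (x - M) <= a * (M - y) + b * (M - w).
Proof. by case: a; case: b => /=; nia. Qed.

Lemma sum_pred_shift_le p (f : nat -> nat) :
  \sum_(i < p) (0 < i) * f i.-1 <= \sum_(i < p) f i.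
Proof.
case: p => [|p]; first by rewrite !big_ord0.
rewrite big_ord_recl big_ord_recr /= mul0n add0n.
under eq_bigr do rewrite mul1n add0n.
exact: leq_addr.
Qed.

Lemma sum_succ_shift_le p (f : nat -> nat) :
  \sum_(i < p) (i.+1 < p) * f i.+1 <= \sum_(i < p) f i.
Proof.
case: p => [|p]; first by rewrite !big_ord0.
rewrite big_ord_recr big_ord_recl /= ltnn mul0n addn0 (leq_trans _ (leq_addl _ _)) //.
by apply: leq_sum => i _; rewrite ltnS ltn_ord mul1n.
Qed.

Lemma path_profile_sum_le (p M : nat) (z : nat -> nat) : 7 < p ->
  (forall i, i < p ->
     (p - path_deg p i) * z i + (0 < i) * z i.-1 + (i.+1 < p) * z i.+1 < p * M) ->
  \sum_(i < p) z i + (p + 2) %/ 3 <= p * M + 1.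
Proof.
move=> p_gt7 hz; pose deficit i := M - z i; pose excess i := z i - M.
pose nbr_deficit i := (0 < i) * deficit i.-1 + (i.+1 < p) * deficit i.+1.
have balance : \sum_(i < p) z i + \sum_(i < p) deficit i = p * M + \sum_(i < p) excess i.
  rewrite -big_split -[p in p * M]card_ord -sum_nat_const -big_split /=.
  by apply: eq_bigr => i _; rewrite /deficit /excess; lia.
have local_deficit i : i < p ->
    0 < nbr_deficit i + deficit i /\ (p - 2) * excess i <= nbr_deficit i.
  by move=> /hz; apply: deficit_bounds; lia.
have sum_nbr_deficit : \sum_(i < p) nbr_deficit i <= 2 * \sum_(i < p) deficit i.
  by rewrite big_split mul2n -addnn leq_add ?sum_pred_shift_le ?sum_succ_shift_le.
have sum_deficit_ge : p <= 3 * \sum_(i < p) deficit i.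
  apply: leq_trans (_ : \sum_(i < p) (nbr_deficit i + deficit i) <= _).
    by rewrite -[p in p <= _]card_ord -sum1_card leq_sum // => i _; case: (local_deficit i).
  by rewrite big_split /= addnC mulSn leq_add2l.
have sum_excess_le : (p - 2) * \sum_(i < p) excess i <= 2 * \sum_(i < p) deficit i.
  apply: leq_trans sum_nbr_deficit; rewrite big_distrr leq_sum // => i _.
  by case: (local_deficit i).
move: sum_deficit_ge sum_excess_le balance.
move: (\sum_(i < p) z i) (\sum_(i < p) deficit i) (\sum_(i < p) excess i) => S X A.
(* With c := (p + 2) %/ 3 <= X: (p - 2) (A + c) <= 2 X + (p - 2) c <= (p - 2) (X + 1),
   the last step because 2 c <= p - 2 as soon as 7 < p. *)
nia.
Qed.

Lemma kendall_code_card_le n M (C : {set 'S_n}) :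
  7 < n -> n * M = (n.-1)`!.+1 -> kendall_code 3 C ->
  #|C| + (n + 2) %/ 3 <= (n.-1)`! + 2.
Proof.
move=> n_gt7 nM codeC; have n_gt0 : 0 < n by lia.
rewrite -(sum_preim_count C (Ordinal n_gt0)).
apply: leq_trans (path_profile_sum_le (M := M) n_gt7 _) _; last by rewrite nM addn1 addn2.
move=> i i_lt_n; rewrite nM ltnS.
by apply: (kendall_code_path_bound _ (Ordinal i_lt_n)) codeC; lia.
Qed.

Theorem theorem1p1 (p : nat) :
  prime p -> 11 <= p ->
  P_kendall p 3 <= (p.-1)`! - (p + 2) %/ 3 + 2 /\
  (p.-1)`! - (p + 2) %/ 3 + 2 <= (p.-1)`! - 2.
Proof.
move=> p_prime p_ge11; have := fact_geq p.-1; split; last by lia.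
move: p_prime; rewrite Wilson; last by lia.
case/dvdnP=> M wilson; apply/bigmax_leqP => C codeC.
have pM : p * M = (p.-1)`!.+1 by rewrite mulnC wilson.
have := kendall_code_card_le (_ : 7 < p) pM codeC; lia.
Qed.
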